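(* Let $A\in\mathbb{C}^{m\times n}$. Then there exists $X\in A\{1,4^{\mathfrak{m}}\}$ if and only if there exists $Y\in A\{1,2,4^{\mathfrak{m}}\}$.
   Context: For a positive integer $k$, the Minkowski metric matrix of order $k$ is $G_k=\mathrm{diag}(1,-I_{k-1})$ (with $G_1=(1)$). For $A\in\mathbb{C}^{m\times n}$, the Minkowski adjoint is $A^{\sim}=G_nA^*G_m$, where $A^*$ is the conjugate transpose. For $A\in\mathbb{C}^{m\times n}$ and $X\in\mathbb{C}^{n\times m}$ consider the equations $(1)\ AXA=A$, $(2)\ XAX=X$, $(3^{\mathfrak{m}})\ (AX)^{\sim}=AX$, $(4^{\mathfrak{m}})\ (XA)^{\sim}=XA$; $A\{i,\dots,k\}$ denotes the set of all $X$ satisfying the listed equations. *)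

(* Complex numbers C are modelled as R[i] = complex R for an
   arbitrary R : realType (mathcomp-real-closed's `complex`), so R[i] is C. *)
From HB Require Import structures.
From mathcomp Require Import all_boot all_algebra.
From mathcomp Require Import complex reals.
Set Implicit Arguments. Unset Strict Implicit. Unset Printing Implicit Defensive.
Import GRing.Theory.
Local Open Scope ring_scope.

Definition minkG {F : nzRingType} (k : nat) : 'M[F]_k :=
  \matrix_(i < k, j < k) (if i == j then (if val i == 0%N then 1 else -1) else 0).

Definition ctrmx {R : realType} {m n : nat} (A : 'M[R[i]]_(m, n)) : 'M[R[i]]_(n, m) :=
  (map_mx (fun z => (z^*)%C) A)^T.

Definition mink_adj {R : realType} {m n : nat} (A : 'M[R[i]]_(m, n)) : 'M[R[i]]_(n, m) :=
  minkG n *m ctrmx A *m minkG m.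

Definition eq1 {R : realType} {m n : nat} (A : 'M[R[i]]_(m, n)) (X : 'M[R[i]]_(n, m)) : Prop :=
  A *m X *m A = A.
Definition eq2 {R : realType} {m n : nat} (A : 'M[R[i]]_(m, n)) (X : 'M[R[i]]_(n, m)) : Prop :=
  X *m A *m X = X.
Definition eq4m {R : realType} {m n : nat} (A : 'M[R[i]]_(m, n)) (X : 'M[R[i]]_(n, m)) : Prop :=
  mink_adj (X *m A) = X *m A.

From HB Require Import structures.
From mathcomp Require Import all_boot all_algebra.
From mathcomp Require Import complex reals.
Local Open Scope ring_scope.

(* If X is a {1}-inverse of A, then Y = XAX is a {1,2}-inverse with YA = XA,
   so Y inherits every property of XA, in particular its Minkowski
   self-adjointness (4^m). *)

Section InnerInverseSandwich.
Variables (R : pzRingType) (m n : nat) (A : 'M[R]_(m, n)) (X : 'M[R]_(n, m)).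
Hypothesis AXA : A *m X *m A = A.

Lemma inner_inv_sandwich_mulmx : X *m A *m X *m A = X *m A.
Proof. by rewrite -[in RHS]AXA !mulmxA. Qed.

Lemma inner_inv_sandwich_inner : A *m (X *m A *m X) *m A = A.
Proof. by rewrite !mulmxA AXA AXA. Qed.

Lemma inner_inv_sandwich_reflexive :
  X *m A *m X *m A *m (X *m A *m X) = X *m A *m X.
Proof. by rewrite inner_inv_sandwich_mulmx !mulmxA inner_inv_sandwich_mulmx. Qed.

End InnerInverseSandwich.

Theorem theorem4p5 (R : realType) (m n : nat) (A : 'M[R[i]]_(m, n)) :
  (exists X : 'M[R[i]]_(n, m), eq1 A X /\ eq4m A X) <->
  (exists Y : 'M[R[i]]_(n, m), eq1 A Y /\ eq2 A Y /\ eq4m A Y).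
Proof.
split=> [[X [AXA XA_adj]] | [Y [AYA [_ YA_adj]]]]; last by exists Y.
exists (X *m A *m X); split; [|split].
- exact: inner_inv_sandwich_inner.
- exact: inner_inv_sandwich_reflexive.
- by rewrite /eq4m inner_inv_sandwich_mulmx.
Qed.
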